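(* Consider the hybrid system $\mathcal H$ described in the context (with arbitrary design choices $\alpha_i\in\mathcal K_\infty$, $c_i\ge0$, $b_i\in[0,1]$, $\sigma_i\ge0$, $\varepsilon_i>0$), and suppose Assumption 2 holds. Let $q=(x,z,e,\eta)$ be a solution of $\mathcal H$ for some input $w\in\mathcal L_{\mathcal W}$, and let $i\in\{1,\dots,N\}$. If there exists $(t,j)\in\operatorname{dom}q$ such that $$|e_i(t',j')|<\gamma_i^{-1}(\varepsilon_i)\quad\text{for all }(t',j')\in\operatorname{dom}q\text{ with }t'+j'\ge t+j,$$ then $\sup\{k\in\mathbb Z_{\ge0}:\exists s,\ (s,k)\in\mathcal T_i(q)\}<\infty$. Moreover, if such a condition holds for every $i\in\{1,\dots,N\}$, then $\sup\{k\in\mathbb Z_{\ge0}:\exists s,\ (s,k)\in\operatorname{dom}q\}<\infty$.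
   Context: Notation: $\mathcal K_\infty$ is the class of continuous, strictly increasing, unbounded functions $\mathbb R_{\ge0}\to\mathbb R_{\ge0}$ vanishing at $0$; $|\cdot|$ is the Euclidean norm. For $S\subseteq\mathbb R^m$, $\mathcal L_S$ is the set of Lebesgue measurable, locally essentially bounded functions $\mathbb R_{\ge0}\to S$. Plant: $\dot x=f_p(x,u,v)$, $y=h(x)$, $x\in\mathbb R^{n_x}$, $u\in\mathcal L_{\mathcal U}$, $v\in\mathcal L_{\mathcal V}$, $\mathcal U\subseteq\mathbb R^{n_u}$, $\mathcal V\subseteq\mathbb R^{n_v}$; $f_p$ locally Lipschitz in $x$, continuous in the others; $h$ continuously differentiable. Output split into $N\in\{1,\dots,n_y\}$ nodes $y=(h_1(x),\dots,h_N(x))$, $y_i\in\mathbb R^{n_{y_i}}$. Observer data: continuous $f_o:\mathbb R^{n_z}\times\mathbb R^{n_u}\times\mathbb R^{n_y}\times\mathbb R^{n_y}\to\mathbb R^{n_z}$ ($n_z\ge n_x$), $\psi:\mathbb R^{n_z}\to\mathbb R^{n_x}$ with right inverse $\psi^{-R}$; the observer has access to $u$ at all times (Assumption 1). Assumption 2: there exist $\underline\alpha,\overline\alpha,\alpha,\gamma_1,\dots,\gamma_N,\theta\in\mathcal K_\infty$ and continuously differentiable $V:\mathbb R^{n_x}\times\mathbb R^{n_z}\to\mathbb R_{\ge0}$ such that for all $x,z$, $u\in\mathcal U$, $v\in\mathcal V$, $e=(e_1,\dots,e_N)\in\mathbb R^{n_y}$ ($e_i\in\mathbb R^{n_{y_i}}$),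 $\hat y\in\mathbb R^{n_y}$: $\underline\alpha(|x-\psi(z)|)\le V(x,z)\le\overline\alpha(|\psi^{-R}(x)-z|)$ and $\langle\nabla V(x,z),(f_p(x,u,v),f_o(z,u,h(x)+e,\hat y))\rangle\le-\alpha(V(x,z))+\sum_i\gamma_i(|e_i|)+\theta(|v|)$. Hybrid system $\mathcal H$: state $q=(x,z,e,\eta)\in\mathcal Q:=\mathbb R^{n_x}\times\mathbb R^{n_z}\times\mathbb R^{n_y}\times\mathbb R^N_{\ge0}$, input $w=(u,v)\in\mathcal W:=\mathcal U\times\mathcal V$. Flow map $F(q,w):=(f_p(x,u,v),f_o(z,u,h(x)+e,h(\psi(z))),g_1,\dots,g_N,\ell_1,\dots,\ell_N)$, $g_i=-\frac{\partial h_i(x)}{\partial x}f_p(x,u,v)$, $\ell_i=-\alpha_i(\eta_i)+c_i\gamma_i(|e_i|)$. $\mathcal C:=\bigcap_i\{q:\gamma_i(|e_i|)\le\sigma_i\alpha_i(\eta_i)+\varepsilon_i\}$, $\mathcal D:=\bigcup_i\mathcal D_i$, $\mathcal D_i:=\{q:\gamma_i(|e_i|)\ge\sigma_i\alpha_i(\eta_i)+\varepsilon_i\}$. $G(q):=\bigcup_iG_i(q)$, $G_i(q)=\emptyset$ if $q\notin\mathcal D_i$, else $G_i(q)=\{(x,z,e',\eta')\}$ with $e'_i=0,\eta'_i=b_i\eta_i$ and $e'_j=e_j,\eta'_j=\eta_j$ for $j\ne i$. Dynamics: $\dot q=F(q,w)$, $q\in\mathcal C$; $q^+\in G(q)$,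 $q\in\mathcal D$. Solutions: a hybrid time domain is a set $E\subset\mathbb R_{\ge0}\times\mathbb Z_{\ge0}$ such that each truncation $E\cap([0,T]\times\{0,\dots,J\})$, $(T,J)\in E$, equals $\bigcup_j([t_j,t_{j+1}],j)$ for finitely many $0=t_0\le t_1\le\dots$. A hybrid arc $q$ (with $q(\cdot,j)$ locally absolutely continuous) is a solution for input $w\in\mathcal L_{\mathcal W}$ if for each $j$ with $I^j:=\{t:(t,j)\in\operatorname{dom}q\}$ of nonempty interior, $\dot q(t,j)=F(q(t,j),w(t))$ and $q(t,j)\in\mathcal C$ for a.a. $t\in I^j$, and whenever $(t,j),(t,j+1)\in\operatorname{dom}q$, $q(t,j)\in\mathcal D$ and $q(t,j+1)\in G(q(t,j))$. For a solution $q$, $\mathcal T_i(q):=\{(t,j)\in\operatorname{dom}q:q(t,j)\in\mathcal D_i\text{ and }q(t,j+1)\in G_i(q(t,j))\}$. *)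

From HB Require Import structures.
From mathcomp Require Import all_boot all_order all_algebra.
From mathcomp Require Import all_classical all_reals all_analysis.
Import Order.TTheory GRing.Theory Num.Theory.
Import numFieldNormedType.Exports.

Set Implicit Arguments.
Unset Strict Implicit.
Unset Printing Implicit Defensive.

Local Open Scope classical_set_scope.
Local Open Scope ring_scope.

Section HybridDefs.
Context {R : realType}.

Definition enorm {n : nat} (v : 'rV[R]_n) : R :=
  Num.sqrt (\sum_(k < n) v ord0 k ^+ 2).

Definition Kinf (f : R -> R) : Prop :=
  [/\ f 0 = 0,
      {within [set s : R | 0 <= s], continuous f},
      (forall s1 s2 : R, 0 <= s1 -> s1 < s2 -> f s1 < f s2) &
      (forall M : R, exists s : R, 0 <= s /\ M <= f s)].

Definition Kinv (f : R -> R) (y : R) : R :=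
  xget 0 [set s : R | 0 <= s /\ f s = y].

(* continuous differentiability (on a finite-dimensional normed space):
   differentiable everywhere, with x |-> Df(x) v continuous for each v *)
Definition C1 {V W : normedModType R} (f : V -> W) : Prop :=
  (forall x, differentiable f x) /\ (forall v : V, continuous (fun x => 'd f x v)).

Definition loc_lipschitz {m n : nat} (f : 'rV[R]_m -> 'rV[R]_n) : Prop :=
  forall x0, exists L r : R, 0 < r /\
    forall x1 x2, enorm (x1 - x0) < r -> enorm (x2 - x0) < r ->
      enorm (f x1 - f x2) <= L * enorm (x1 - x2).

(* Lebesgue measurable subsets of R: Borel up to a Lebesgue-null set *)
Definition lebesgue_measurable_set (A : set R) : Prop :=
  exists B : set R, measurable B /\
    (@lebesgue_measure R).-negligible ((A `\` B) `|` (B `\` A)).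

Definition lebesgue_measurable_fun {n : nat} (u : R -> 'rV[R]_n) : Prop :=
  forall (k : 'I_n) (B : set R), measurable B ->
    lebesgue_measurable_set [set t | 0 <= t /\ B (u t ord0 k)].

Definition loc_ess_bounded {n : nat} (u : R -> 'rV[R]_n) : Prop :=
  forall T : R, 0 <= T -> exists M : R,
    {ae (@lebesgue_measure R), forall t, 0 <= t <= T -> enorm (u t) <= M}.

Definition inL {n : nat} (S : set 'rV[R]_n) (u : R -> 'rV[R]_n) : Prop :=
  [/\ lebesgue_measurable_fun u, loc_ess_bounded u &
      forall t, 0 <= t -> S (u t)].

Definition hybrid_time_domain (E : set (R * nat)) : Prop :=
  (forall t j, E (t, j) -> 0 <= t) /\
  forall T J, E (T, J) -> exists tt : nat -> R,
    [/\ tt 0%N = 0,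
        (forall k, (k <= J)%N -> tt k <= tt k.+1) &
        forall s k, (E (s, k) /\ s <= T /\ (k <= J)%N) <->
                    ((k <= J)%N /\ tt k <= s <= tt k.+1)].

Definition abs_cont_on {V : normedModType R} (f : R -> V) (a b : R) : Prop :=
  forall eps : R, 0 < eps -> exists delta : R, 0 < delta /\
    forall (n : nat) (l r : nat -> R),
      (forall k, (k < n)%N -> a <= l k /\ l k <= r k /\ r k <= b) ->
      (forall k k', (k < n)%N -> (k' < n)%N -> k <> k' ->
          r k <= l k' \/ r k' <= l k) ->
      \sum_(k < n) (r k - l k) < delta ->
      \sum_(k < n) `|f (r k) - f (l k)| < eps.

Definition loc_abs_cont_on {V : normedModType R} (f : R -> V) (I : set R) : Prop :=
  forall a b, I a -> I b -> a <= b -> abs_cont_on f a b.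

Section System.
Context (nx nz nu nv N : nat) (nys : 'I_N -> nat).
Local Notation ny := (\sum_(i < N) nys i)%N.

(* state q = (x, z, e, eta) *)
Definition state := ('rV[R]_nx * 'rV[R]_nz * 'rV[R]_ny * 'rV[R]_N)%type.

Context (fp : 'rV[R]_nx -> 'rV[R]_nu -> 'rV[R]_nv -> 'rV[R]_nx)
        (h : 'rV[R]_nx -> 'rV[R]_ny)
        (fo : 'rV[R]_nz -> 'rV[R]_nu -> 'rV[R]_ny -> 'rV[R]_ny -> 'rV[R]_nz)
        (psi : 'rV[R]_nz -> 'rV[R]_nx)
        (gam alphad : 'I_N -> R -> R) (c b sigma eps : 'I_N -> R).

Definition blk (e : 'rV[R]_ny) (i : 'I_N) : 'rV[R]_(nys i) := submxrow e i.

Definition inQ (q : state) : Prop := forall i, 0 <= q.2 ord0 i.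

Definition Fmap (q : state) (u : 'rV[R]_nu) (v : 'rV[R]_nv) : state :=
  let x := q.1.1.1 in let z := q.1.1.2 in let e := q.1.2 in let eta := q.2 in
  (fp x u v,
   fo z u (h x + e) (h (psi z)),
   \mxrow_(i < N) (- 'd (fun x' => blk (h x') i) x (fp x u v)),
   \row_(i < N) (- alphad i (eta ord0 i) + c i * gam i (enorm (blk e i)))).

Definition Cset (q : state) : Prop :=
  inQ q /\ forall i, gam i (enorm (blk q.1.2 i)) <= sigma i * alphad i (q.2 ord0 i) + eps i.

Definition Dset_i (i : 'I_N) (q : state) : Prop :=
  inQ q /\ sigma i * alphad i (q.2 ord0 i) + eps i <= gam i (enorm (blk q.1.2 i)).

Definition Dset (q : state) : Prop := exists i, Dset_i i q.

(* the (single) element of G_i(q), for q in D_i *)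
Definition Gi (i : 'I_N) (q : state) : state :=
  (q.1.1.1, q.1.1.2,
   \mxrow_(j < N) (if j == i then 0 else blk q.1.2 j),
   \row_(j < N) (if j == i then b i * q.2 ord0 j else q.2 ord0 j)).

(* q' in G(q) = union of the G_i(q), G_i(q) empty off D_i *)
Definition Gset (q q' : state) : Prop := exists i, Dset_i i q /\ q' = Gi i q.

(* q (defined on dom, arbitrary elsewhere) is a solution of H for input w=(u,v) *)
Definition is_solution (dom : set (R * nat)) (q : R -> nat -> state)
    (u : R -> 'rV[R]_nu) (v : R -> 'rV[R]_nv) : Prop :=
  [/\ hybrid_time_domain dom,
      (forall j, loc_abs_cont_on (fun t => q t j) [set t | dom (t, j)]),
      (forall j, [set t | dom (t, j)]° !=set0 ->
         {ae (@lebesgue_measure R), forall t, dom (t, j) ->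
            [/\ derivable (fun s => q s j) t 1,
                derive1 (fun s => q s j) t = Fmap (q t j) (u t) (v t) &
                Cset (q t j)]}) &
      (forall t j, dom (t, j) -> dom (t, j.+1) ->
         Dset (q t j) /\ Gset (q t j) (q t j.+1))].

Definition Tset (dom : set (R * nat)) (q : R -> nat -> state) (i : 'I_N)
    (t : R) (j : nat) : Prop :=
  [/\ dom (t, j), dom (t, j.+1), Dset_i i (q t j) & q t j.+1 = Gi i (q t j)].

Definition eventually_small (dom : set (R * nat)) (q : R -> nat -> state)
    (i : 'I_N) : Prop :=
  exists (t : R) (j : nat), dom (t, j) /\
    forall (t' : R) (j' : nat), dom (t', j') -> t + j%:R <= t' + j'%:R ->
      enorm (blk (q t' j').1.2 i) < Kinv (gam i) (eps i).

End System.

Definition Assumption2 (nx nz nu nv N : nat) (nys : 'I_N -> nat)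
    (fp : 'rV[R]_nx -> 'rV[R]_nu -> 'rV[R]_nv -> 'rV[R]_nx)
    (h : 'rV[R]_nx -> 'rV[R]_(\sum_(i < N) nys i))
    (fo : 'rV[R]_nz -> 'rV[R]_nu -> 'rV[R]_(\sum_(i < N) nys i) ->
          'rV[R]_(\sum_(i < N) nys i) -> 'rV[R]_nz)
    (psi : 'rV[R]_nz -> 'rV[R]_nx) (psiR : 'rV[R]_nx -> 'rV[R]_nz)
    (U : set 'rV[R]_nu) (Vs : set 'rV[R]_nv) (gam : 'I_N -> R -> R) : Prop :=
  exists (alo ahi a th : R -> R) (V : 'rV[R]_nx * 'rV[R]_nz -> R),
    [/\ Kinf alo, Kinf ahi, Kinf a, (forall i, Kinf (gam i)) & Kinf th] /\
    C1 V /\ (forall p, 0 <= V p) /\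
    forall x z u v (e yhat : 'rV[R]_(\sum_(i < N) nys i)), U u -> Vs v ->
      alo (enorm (x - psi z)) <= V (x, z) <= ahi (enorm (psiR x - z)) /\
      'd V (x, z) (fp x u v, fo z u (h x + e) yhat)
        <= - a (V (x, z)) + \sum_(i < N) gam i (enorm (blk e i)) + th (enorm v).

End HybridDefs.

From HB Require Import structures.
From mathcomp Require Import all_boot all_order all_algebra.
From mathcomp Require Import all_classical all_reals all_analysis.
From mathcomp Require Import lra.
Import Order.TTheory GRing.Theory Num.Theory.
Import numFieldNormedType.Exports.

Set Implicit Arguments.
Unset Strict Implicit.
Unset Printing Implicit Defensive.

Local Open Scope classical_set_scope.
Local Open Scope ring_scope.

(* A jump of node i can only happen when gam_i(|e_i|) >= sigma_i alpha_i(eta_i) + eps_i >= eps_i,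
   i.e. when |e_i| >= gam_i^-1(eps_i).  Once |e_i| stays below this threshold from hybrid time
   (t, j) on, every jump of node i occurs at some (s, k) with s + k < t + j, so k is bounded.
   Every jump of the whole system is a jump of some node, so if all nodes are eventually small
   the jump counter is bounded by the largest of these finitely many bounds. *)

Section KinfFacts.
Variable R : realType.

Lemma enorm_ge0 n (v : 'rV[R]_n) : 0 <= enorm v.
Proof. exact: sqrtr_ge0. Qed.

Lemma Kinf_ge0 (f : R -> R) s : Kinf f -> 0 <= s -> 0 <= f s.
Proof.
case=> f0 _ f_incr _; rewrite le_eqVlt => /orP[/eqP <- | s_gt0].
  by rewrite f0.
by rewrite -f0 ltW // f_incr.
Qed.

(* [Kinv f y] is the junk value 0 when [y] has no preimage in [0, +oo). *)
Lemma Kinv_gt0K (f : R -> R) y : 0 < Kinv f y -> f (Kinv f y) = y.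
Proof.
by rewrite /Kinv; case: xgetP => [s _ [] | _]; rewrite ?ltxx.
Qed.

Lemma Kinf_lt_Kinv (f : R -> R) y s : Kinf f -> 0 <= s -> s < Kinv f y -> f s < y.
Proof.
move=> Kf s_ge0 s_lt; have Kinv_gt0 : 0 < Kinv f y by apply: le_lt_trans s_lt.
by case: Kf => _ _ f_incr _; rewrite -[X in _ < X](Kinv_gt0K Kinv_gt0) f_incr.
Qed.

End KinfFacts.

Lemma hybrid_time_domain_ge0 (R : realType) (dom : set (R * nat)) t j :
  hybrid_time_domain dom -> dom (t, j) -> 0 <= t.
Proof. by case=> dom_ge0 _; apply: dom_ge0. Qed.

Lemma hybrid_time_domain_jump (R : realType) (dom : set (R * nat)) s k :
  hybrid_time_domain dom -> dom (s, k.+1) -> exists t, dom (t, k) /\ dom (t, k.+1).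
Proof.
case=> _ dom_intervals dom_sk1.
have [tt [_ tt_mono tt_iff]] := dom_intervals s k.+1 dom_sk1.
have [_ /andP[tt_le_s s_le_tt]] := (tt_iff s k.+1).1 (conj dom_sk1 (conj (lexx _) (leqnn _))).
exists (tt k.+1); split.
- have := (tt_iff (tt k.+1) k).2; rewrite (tt_mono k (leqnSn _)) lexx.
  by move=> /(_ (conj (leqnSn _) isT)) [].
- have := (tt_iff (tt k.+1) k.+1).2; rewrite (le_trans tt_le_s s_le_tt) lexx.
  by move=> /(_ (conj (leqnn _) isT)) [].
Qed.

Section Jumps.
Variables (R : realType) (nx nz N : nat) (nys : 'I_N -> nat).
Variables (gam alphad : 'I_N -> R -> R) (b sigma eps : 'I_N -> R).
Variables (dom : set (R * nat)) (q : R -> nat -> @state R nx nz N nys).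

Hypothesis gam_Kinf : forall i, Kinf (gam i).
Hypothesis alphad_Kinf : forall i, Kinf (alphad i).
Hypothesis sigma_ge0 : forall i, 0 <= sigma i.
Hypothesis dom_htd : hybrid_time_domain dom.

Lemma Dset_i_eps_le_gam i (p : @state R nx nz N nys) :
  Dset_i gam alphad sigma eps i p -> eps i <= gam i (enorm (blk p.1.2 i)).
Proof.
case=> p_in_Q; apply: le_trans; rewrite lerDr mulr_ge0 //.
exact: Kinf_ge0 (p_in_Q i).
Qed.

Lemma Tset_before_eventually_small i t j s k :
  (forall t' j', dom (t', j') -> t + j%:R <= t' + j'%:R ->
     enorm (blk (q t' j').1.2 i) < Kinv (gam i) (eps i)) ->
  Tset gam alphad b sigma eps dom q i s k -> s + k%:R < t + j%:R.
Proof.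
move=> small [dom_sk _ Dsk _]; rewrite ltNge; apply/negP => late.
have := Kinf_lt_Kinv (gam_Kinf i) (enorm_ge0 _) (small s k dom_sk late).
by rewrite ltNge Dset_i_eps_le_gam.
Qed.

Lemma Tset_bounded_of_eventually_small i :
  eventually_small gam eps dom q i ->
  exists K : nat, forall s k, Tset gam alphad b sigma eps dom q i s k -> (k <= K)%N.
Proof.
move=> [t [j [dom_tj small]]].
have tj_ge0 : 0 <= t + j%:R by rewrite addr_ge0 ?ler0n // (hybrid_time_domain_ge0 dom_htd dom_tj).
exists (Num.Def.archi_bound (t + j%:R)) => s k Tsk; apply: ltnW.
have s_ge0 : 0 <= s by case: Tsk => dom_sk _ _ _; apply: hybrid_time_domain_ge0 dom_sk.
have := Tset_before_eventually_small small Tsk; have := archi_boundP tj_ge0.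
by rewrite -(ltr_nat R); lra.
Qed.

Lemma dom_bounded_of_Tset_bounded :
  (forall t j, dom (t, j) -> dom (t, j.+1) ->
     Gset gam alphad b sigma eps (q t j) (q t j.+1)) ->
  (forall i, exists K : nat, forall s k,
     Tset gam alphad b sigma eps dom q i s k -> (k <= K)%N) ->
  exists K : nat, forall s k, dom (s, k) -> (k <= K)%N.
Proof.
move=> jumps /choice [K K_bounds].
exists (\max_(i < N) K i).+1 => s [// | k] dom_sk1.
have [t [dom_tk dom_tk1]] := hybrid_time_domain_jump dom_htd dom_sk1.
have [i [Di q_jump]] := jumps t k dom_tk dom_tk1.
have := K_bounds i t k (And4 dom_tk dom_tk1 Di q_jump).
by move=> /leq_trans; apply; rewrite leq_bigmax.
Qed.

End Jumps.

Theorem lemma1 (R : realType) (nx nz nu nv N : nat) (nys : 'I_N -> nat)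
    (fp : 'rV[R]_nx -> 'rV[R]_nu -> 'rV[R]_nv -> 'rV[R]_nx)
    (h : 'rV[R]_nx -> 'rV[R]_(\sum_(i < N) nys i))
    (fo : 'rV[R]_nz -> 'rV[R]_nu -> 'rV[R]_(\sum_(i < N) nys i) ->
          'rV[R]_(\sum_(i < N) nys i) -> 'rV[R]_nz)
    (psi : 'rV[R]_nz -> 'rV[R]_nx) (psiR : 'rV[R]_nx -> 'rV[R]_nz)
    (U : set 'rV[R]_nu) (Vs : set 'rV[R]_nv)
    (gam alphad : 'I_N -> R -> R) (c b sigma eps : 'I_N -> R) :
  (* standing assumptions on the plant and observer data *)
  (0 < N)%N -> (forall i, 0 < nys i)%N -> (nx <= nz)%N ->
  (forall u v, U u -> Vs v -> loc_lipschitz (fun x => fp x u v)) ->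
  (forall x, {within U `*` Vs, continuous (fun w : 'rV[R]_nu * 'rV[R]_nv => fp x w.1 w.2)}) ->
  C1 h ->
  continuous (fun p : 'rV[R]_nz * 'rV[R]_nu * 'rV[R]_(\sum_(i < N) nys i)
                      * 'rV[R]_(\sum_(i < N) nys i) => fo p.1.1.1 p.1.1.2 p.1.2 p.2) ->
  (forall x, psi (psiR x) = x) ->
  (* design parameters *)
  (forall i, Kinf (alphad i)) -> (forall i, 0 <= c i) ->
  (forall i, 0 <= b i <= 1) -> (forall i, 0 <= sigma i) -> (forall i, 0 < eps i) ->
  (* Assumption 2 *)
  Assumption2 fp h fo psi psiR U Vs gam ->
  forall (u : R -> 'rV[R]_nu) (v : R -> 'rV[R]_nv)
         (dom : set (R * nat)) (q : R -> nat -> @state R nx nz N nys),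
  inL U u -> inL Vs v ->
  is_solution fp h fo psi gam alphad c b sigma eps dom q u v ->
  (forall i : 'I_N, eventually_small gam eps dom q i ->
     exists K : nat, forall (s : R) (k : nat),
       Tset gam alphad b sigma eps dom q i s k -> (k <= K)%N) /\
  ((forall i : 'I_N, eventually_small gam eps dom q i) ->
     exists K : nat, forall (s : R) (k : nat), dom (s, k) -> (k <= K)%N).
Proof.
move=> _ _ _ _ _ _ _ _ alphad_Kinf _ _ sigma_ge0 _ A2 u v dom q _ _ [dom_htd _ _ jumps].
have gam_Kinf : forall i, Kinf (gam i).
  by case: A2 => [? [? [? [? [? [[_ _ _ Kgam _] _]]]]]].
have Tset_bounded i : eventually_small gam eps dom q i -> exists K : nat,
    forall s k, Tset gam alphad b sigma eps dom q i s k -> (k <= K)%N.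
  exact: (Tset_bounded_of_eventually_small b gam_Kinf alphad_Kinf sigma_ge0 dom_htd).
split=> // all_small.
apply: (@dom_bounded_of_Tset_bounded _ _ _ _ _ gam alphad b sigma eps dom q dom_htd).
  by move=> t j dom_tj dom_tj1; case: (jumps t j dom_tj dom_tj1).
by move=> i; apply: Tset_bounded.
Qed.
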